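(* For every integer $k\ge 2$, the complete graph $\mathcal K_k$ is an almost minor of the $(2k-2)\times(2k-2)$ grid graph $\mathcal G_{2k-2}$.
   Context: The $n\times n$ grid graph $\mathcal G_n$ has vertices $v_{i,j}$, $i,j\in[n]$, with $v_{i,j}$ adjacent to $v_{i',j'}$ iff $|i-i'|+|j-j'|=1$. For graphs $\mathcal G_X,\mathcal G_Y$ with vertex sets $X,Y$, a map $M:Y\to 2^X$ is almost minor if: (1) $|M(y)|\in\{1,2\}$ for every $y\in Y$; (2) for every $x\in X$ there is $y\in Y$ with $M(y)=\{x\}$, and for all $x,x'$ adjacent in $\mathcal G_X$ there are $y,y'$ adjacent in $\mathcal G_Y$ with $M(y)=\{x\}$ and $M(y')=\{x'\}$; (3) for each $x\in X$ the set $\{y: x\in M(y)\}$ is connected in $\mathcal G_Y$; (4) if $M(y)=\{x,x'\}$ with $x\ne x'$ and $y'$ is adjacent to $y$, then $M(y')=\{x\}$ or $M(y')=\{x'\}$. $\mathcal G_X$ is an almost minor of $\mathcal G_Y$ if such a map exists. *)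

From mathcomp Require Import all_boot.
Set Implicit Arguments. Unset Strict Implicit. Unset Printing Implicit Defensive.

(* |a - b| on nat (truncated subtractions, one of which is 0). *)
Definition dist (a b : nat) : nat := ((a - b) + (b - a))%N.

Definition grid_adj (n : nat) : rel ('I_n * 'I_n) :=
  fun u v => (dist u.1 v.1 + dist u.2 v.2 == 1)%N.

Definition complete_adj (k : nat) : rel 'I_k := fun i j => i != j.

Definition connected_in (Y : finType) (eY : rel Y) (S : {set Y}) : Prop :=
  forall a b, a \in S -> b \in S ->
    connect (fun u v => [&& eY u v, u \in S & v \in S]) a b.

Definition almost_minor_map (X Y : finType) (eX : rel X) (eY : rel Y)
  (M : Y -> {set X}) : Prop :=
  [/\ (forall y, #|M y| = 1 \/ #|M y| = 2)%N,
      (forall x, exists y, M y = [set x]),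
      (forall x x', eX x x' ->
         exists y y', [/\ eY y y', M y = [set x] & M y' = [set x']]),
      (forall x, connected_in eY [set y | x \in M y]) &
      (forall y x x', M y = [set x; x'] -> x != x' ->
         forall y', eY y y' -> M y' = [set x] \/ M y' = [set x'])].

Definition almost_minor (X Y : finType) (eX : rel X) (eY : rel Y) : Prop :=
  exists M : Y -> {set X}, almost_minor_map eX eY M.

From mathcomp Require Import all_boot zify.
Set Implicit Arguments. Unset Strict Implicit. Unset Printing Implicit Defensive.

(* Write k = p + 2 and number rows, columns and vertices of K_k from 0.  The
   branch set of vertex z is column 2z, column 2z+1 except where it crosses the
   row of a larger vertex, and, for z > 0, row 2z-2 from column 0 to column 2z.
   The row of w meets column 2z of each z < w in the single cell (2w-2, 2z);
   these crossings are the only cells carrying two vertices, and their four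
   neighbours lie in an odd row of column 2z or an odd column of row 2w-2, so
   each carries z or w alone.  The adjacent cells (2w-1, 2z+1) and
   (2w-2, 2z+1) carry z and w alone, which realises the edge zw. *)

Definition induced (T : finType) (e : rel T) (S : {set T}) : rel T :=
  fun u v => [&& e u v, u \in S & v \in S].

Lemma connect_walk_nat (T : finType) (e : rel T) (f : nat -> T) (a b : nat) :
  a <= b -> (forall t, a <= t < b -> e (f t) (f t.+1)) -> connect e (f a) (f b).
Proof.
elim: b => [|b IHb] leab step; first by have -> : a = 0 by lia.
have [ltba | leab'] := ltnP b a; first by have -> : a = b.+1 by lia.
apply: connect_trans (IHb leab' _) (connect1 (step b _)) => [t ht|]; last lia.
by apply: step; lia.
Qed.

Lemma connect_induced_walk (T : finType) (e : rel T) (S : {set T}) (f : nat -> T)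
    (a b : nat) :
  a <= b -> (forall t, a <= t <= b -> f t \in S) ->
  (forall t, a <= t < b -> e (f t) (f t.+1)) -> connect (induced e S) (f a) (f b).
Proof.
move=> leab inS step; apply: connect_walk_nat => // t ht.
by rewrite /induced step // !inS //; lia.
Qed.

Lemma induced_connect_sym (T : finType) (e : rel T) (S : {set T}) :
  symmetric e -> connect_sym (induced e S).
Proof.
move=> e_sym; apply: sym_connect_sym => u v.
by rewrite /induced e_sym (andbC (u \in S)).
Qed.

Lemma grid_adj_sym n : symmetric (@grid_adj n).
Proof. by move=> u v; rewrite /grid_adj /dist; lia. Qed.

Lemma grid_connect_row m (S : {set 'I_m.+1 * 'I_m.+1}) (r c1 c2 : nat) :
  r <= m -> c1 <= c2 <= m -> (forall c, c1 <= c <= c2 -> (inord r, inord c) \in S) ->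
  connect (induced (@grid_adj m.+1) S) (inord r, inord c1) (inord r, inord c2).
Proof.
move=> ler /andP[le12 le2m] inS.
apply: (connect_induced_walk (f := fun c => (inord r, inord c))) => // c hc.
by rewrite /grid_adj /dist /= !inordK; lia.
Qed.

Lemma grid_connect_column m (S : {set 'I_m.+1 * 'I_m.+1}) (c r1 r2 : nat) :
  c <= m -> r1 <= r2 <= m -> (forall r, r1 <= r <= r2 -> (inord r, inord c) \in S) ->
  connect (induced (@grid_adj m.+1) S) (inord r1, inord c) (inord r2, inord c).
Proof.
move=> lecm /andP[le12 le2m] inS.
apply: (connect_induced_walk (f := fun r => (inord r, inord c))) => // r hr.
by rewrite /grid_adj /dist /= !inordK; lia.
Qed.

Lemma card_ord_val_in m (s : seq nat) :
  uniq s -> (forall z, z \in s -> z < m) -> #|[set z : 'I_m | val z \in s]| = size s.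
Proof.
move=> s_uniq s_lt; rewrite cardsE cardE -(size_map val) -filter_map -enumT val_enum_ord.
apply/perm_size/uniq_perm; rewrite ?filter_uniq ?iota_uniq // => z.
by rewrite mem_filter mem_iota andb_idr // => /s_lt.
Qed.

Lemma singleton_of_edges (X Y : finType) (eX : rel X) (eY : rel Y)
    (M : Y -> {set X}) :
  (forall x x', eX x x' -> exists y y', [/\ eY y y', M y = [set x] & M y' = [set x']]) ->
  (forall x, exists x', eX x x') -> forall x, exists y, M y = [set x].
Proof.
move=> edges nbr x; have [x' /edges [y [y' [_ Mx _]]]] := nbr x.
by exists y.
Qed.

(* The cell (r, c) lies on the row of vertex r/2 + 1. *)
Definition on_row (r c : nat) : bool := ~~ odd r && (c <= r.+2).

Definition branch_seq (r c : nat) : seq nat :=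
  if on_row r c then r./2.+1 :: (if ~~ odd c && (c <= r) then [:: c./2] else [::])
  else [:: c./2].

Lemma mem_branch_seq (r c z : nat) : (z \in branch_seq r c) =
  on_row r c && ((z == r./2.+1) || [&& ~~ odd c, c <= r & z == c./2])
  || ~~ on_row r c && (z == c./2).
Proof.
rewrite /branch_seq; case: (on_row r c); last by rewrite inE.
by case: ifP => h; rewrite !inE ?orbF /=; lia.
Qed.

Lemma branch_seq_uniq r c : uniq (branch_seq r c).
Proof.
rewrite /branch_seq; case: ifP => // _; case: ifP => //= /andP[_ lecr].
by rewrite inE andbT; lia.
Qed.

Lemma branch_seq_odd_row r c : odd r -> branch_seq r c = [:: c./2].
Proof. by rewrite /branch_seq /on_row => ->. Qed.

Lemma branch_seq_odd_col r c :
  ~~ odd r -> odd c -> c <= r.+2 -> branch_seq r c = [:: r./2.+1].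
Proof. by rewrite /branch_seq /on_row => -> -> ->. Qed.

Lemma branch_seq_crossing r c :
  ~~ odd r -> ~~ odd c -> c <= r -> branch_seq r c = [:: r./2.+1; c./2].
Proof. by rewrite /branch_seq /on_row => -> -> lecr; rewrite lecr (leqW (leqW lecr)). Qed.

Lemma branch_seq_bound (p r c z : nat) :
  r < (2 * p).+2 -> c < (2 * p).+2 -> z \in branch_seq r c -> z < p.+2.
Proof. by rewrite mem_branch_seq /on_row; lia. Qed.

Lemma branch_seq_cases (r c z : nat) : z \in branch_seq r c ->
  c = 2 * z \/ c = (2 * z).+1 \/ r.+2 = 2 * z /\ c <= 2 * z.
Proof. by rewrite mem_branch_seq /on_row; lia. Qed.

Lemma mem_branch_seq_column (r z : nat) : z \in branch_seq r (2 * z).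
Proof. by rewrite mem_branch_seq /on_row; lia. Qed.

Lemma mem_branch_seq_row (r c z : nat) :
  r.+2 = 2 * z -> c <= 2 * z -> z \in branch_seq r c.
Proof. by rewrite mem_branch_seq /on_row; lia. Qed.

Lemma branch_seq_pair_nbr (r c r' c' a b : nat) :
  a \in branch_seq r c -> b \in branch_seq r c -> a != b ->
  dist r r' + dist c c' == 1 ->
  branch_seq r' c' = [:: a] \/ branch_seq r' c' = [:: b].
Proof.
move=> ha hb neqab adj.
have [er [ec lecr]] : ~~ odd r /\ ~~ odd c /\ c <= r.
  by move: ha hb neqab; rewrite !mem_branch_seq /on_row; lia.
rewrite branch_seq_crossing // !inE in ha hb.
have [[-> [oc' lec']] | [or' ->]] :
    (r' = r /\ odd c' /\ c' <= r.+2) \/ (odd r' /\ c' = c).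
- by move: adj; rewrite /dist; lia.
- rewrite branch_seq_odd_col //.
  have [<- | <-] : r./2.+1 = a \/ r./2.+1 = b by lia.
    by left.
  by right.
- rewrite branch_seq_odd_row //.
  have [<- | <-] : c./2 = a \/ c./2 = b by lia.
    by left.
  by right.
Qed.




Section BranchSets.

Variable p : nat.

Local Notation cell := ('I_(2 * p).+2 * 'I_(2 * p).+2)%type.
Local Notation grid := (@grid_adj (2 * p).+2).

Definition branch_sets (y : cell) : {set 'I_p.+2} :=
  [set z | val z \in branch_seq y.1 y.2].

Lemma branch_sets_card (y : cell) : #|branch_sets y| = 1 \/ #|branch_sets y| = 2.
Proof.
rewrite card_ord_val_in ?branch_seq_uniq //; last by move=> z; apply: branch_seq_bound.
by rewrite /branch_seq; case: ifP => _; [case: ifP => _ |]; [right | left | left].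
Qed.

Lemma branch_sets_seq1 (y : cell) (x : 'I_p.+2) :
  branch_seq y.1 y.2 = [:: val x] -> branch_sets y = [set x].
Proof. by move=> ey; apply/setP => z; rewrite !inE ey inE. Qed.

Lemma branch_sets_edge (x x' : 'I_p.+2) : x != x' ->
  exists y y', [/\ grid y y', branch_sets y = [set x] & branch_sets y' = [set x']].
Proof.
move=> neq; wlog ltxx' : x x' {neq} / x < x'.
  move=> wlog_lt; move: neq; rewrite neq_ltn.
  case/orP=> [/wlog_lt // | /wlog_lt [y [y' [adj ? ?]]]].
  by exists y', y; rewrite grid_adj_sym.
have [ltx ltx'] := (ltn_ord x, ltn_ord x').
exists (inord (2 * x').-1, inord (2 * x).+1), (inord (2 * x').-2, inord (2 * x).+1).
split; first by rewrite /grid_adj /dist /= !inordK; lia.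
  apply: branch_sets_seq1; rewrite /= !inordK ?branch_seq_odd_row; try lia.
  by congr [:: _]; lia.
apply: branch_sets_seq1; rewrite /= !inordK ?branch_seq_odd_col; try lia.
by congr [:: _]; lia.
Qed.

Lemma branch_sets_connected (x : 'I_p.+2) :
  connected_in grid [set y | x \in branch_sets y].
Proof.
set S := [set y | _]; have ltx := ltn_ord x.
have inS r c : r < (2 * p).+2 -> c < (2 * p).+2 ->
    ((inord r, inord c) \in S) = ((x : nat) \in branch_seq r c).
  by move=> ltr ltc; rewrite !inE /= !inordK.
have S_sym : connect_sym (induced grid S).
  exact/induced_connect_sym/grid_adj_sym.
(* Vertex p+1 has no column: its branch set is row 2p. *)
pose hub : cell := if x < p.+1 then (inord (2 * p).+1, inord (2 * x))
                   else (inord (2 * p), inord (2 * p).+1).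
suff to_hub y : y \in S -> connect (induced grid S) y hub.
  move=> a b aS bS; apply: connect_trans (to_hub a aS) _.
  by rewrite S_sym; apply: to_hub.
case: y => [[r ltr] [c ltc]].
rewrite -(inord_val (Ordinal ltr)) -(inord_val (Ordinal ltc)) inS //= => xrc.
rewrite /hub; case: ltnP => [ltxp | lexp].
  have down r0 : r0 < (2 * p).+2 ->
      connect (induced grid S)
        (inord r0, inord (2 * x)) (inord (2 * p).+1, inord (2 * x)).
    move=> ltr0; apply: grid_connect_column => [|| r' hr']; try lia.
    by rewrite inS ?mem_branch_seq_column //; lia.
  case: (branch_seq_cases xrc) => [ec | [ec | [er lec]]]; try subst c.
  - exact: down.
  - apply: connect_trans (down r ltr); rewrite S_sym; apply: connect1.
    by rewrite /induced /grid_adj /dist /= !inordK ?inS ?mem_branch_seq_column ?xrc;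
      lia.
  - apply: connect_trans (down r ltr); apply: grid_connect_row => [|| c' hc']; try lia.
    by rewrite inS ?mem_branch_seq_row //; lia.
have [er lec] : r.+2 = 2 * x /\ c <= 2 * x.
  by case: (branch_seq_cases xrc); lia.
have -> : r = 2 * p by lia.
apply: grid_connect_row => [|| c' hc']; try lia.
by rewrite inS ?mem_branch_seq_row //; lia.
Qed.

Lemma branch_sets_pair_nbr (y : cell) (x x' : 'I_p.+2) :
  branch_sets y = [set x; x'] -> x != x' ->
  forall y', grid y y' -> branch_sets y' = [set x] \/ branch_sets y' = [set x'].
Proof.
move=> ey neq y' adj.
have mem_y z : z \in [set x; x'] -> val z \in branch_seq y.1 y.2 by rewrite -ey inE.
have := branch_seq_pair_nbr (mem_y x (set21 _ _)) (mem_y x' (set22 _ _)) neq adj.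
case=> ey'; [left | right]; exact: branch_sets_seq1.
Qed.

End BranchSets.

Theorem lemma6p10 (k : nat) : (2 <= k)%N ->
  almost_minor (@complete_adj k) (@grid_adj (2 * k - 2)).
Proof.
case: k => [|[|p]] // _; rewrite (_ : 2 * p.+2 - 2 = (2 * p).+2); last by lia.
have complete_nbr (x : 'I_p.+2) : exists x', complete_adj x x'.
  by case: (eqVneq x ord0) => [-> | neq0]; [exists ord_max | exists ord0].
exists (@branch_sets p); split.
- exact: branch_sets_card.
- exact: singleton_of_edges (@branch_sets_edge p) complete_nbr.
- exact: branch_sets_edge.
- exact: branch_sets_connected.
- exact: branch_sets_pair_nbr.
Qed.
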